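(* Let $q\ge2$, $r\ge1$, $\rho\ge2$, $s\ge1$ be integers, $N=r+\rho-1$, $n=sN$, and $\mathcal{R}_{t+1}=\{tN+1,\dots,(t+1)N\}$ for $t=0,\dots,s-1$. Let $\mathcal{C}\subseteq Q^n$ ($|Q|=q$) be a code of cardinality $q^k$ with minimum distance $d$ such that $\mathcal{C}|_{\mathcal{R}_i}$ has minimum distance at least $\rho$ for all $i=1,\dots,s$. Write $d=tN+\partial$ with integers $t\ge0$ and $1\le\partial\le N$. Then $$k\le\begin{cases} r(s-t)+\rho-\partial & \text{if } \rho\le\partial,\\ r(s-t) & \text{if } \rho>\partial.\end{cases}$$
   Context: Minimum distance refers to Hamming distance; $\mathcal{C}|_{\mathcal{R}_i}$ is the projection of $\mathcal{C}$ onto the coordinates in $\mathcal{R}_i$. *)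

From mathcomp Require Import all_boot.
Set Implicit Arguments. Unset Strict Implicit. Unset Printing Implicit Defensive.

(* Words of length n over alphabet Q are finite functions 'I_n -> Q
   (coordinates are 0-based: coordinate j here is coordinate j+1 of the paper). *)

Definition hdist (Q : finType) (n : nat) (x y : {ffun 'I_n -> Q}) : nat :=
  #|[set j : 'I_n | x j != y j]|.

Definition hdist_on (Q : finType) (n : nat) (R : {set 'I_n})
    (x y : {ffun 'I_n -> Q}) : nat :=
  #|[set j in R | x j != y j]|.

Definition min_dist (Q : finType) (n : nat) (C : {set {ffun 'I_n -> Q}}) (d : nat) : Prop :=
  (exists x y, [/\ x \in C, y \in C, x != y & hdist x y = d]) /\
  (forall x y, x \in C -> y \in C -> x != y -> d <= hdist x y).

Definition proj_min_dist_ge (Q : finType) (n : nat) (C : {set {ffun 'I_n -> Q}})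
    (R : {set 'I_n}) (rho : nat) : Prop :=
  forall x y, x \in C -> y \in C -> 0 < hdist_on R x y -> rho <= hdist_on R x y.

(* The block R_{i+1} = {iN+1, ..., (i+1)N} (1-based), i.e. {iN, ..., (i+1)N - 1} 0-based *)
Definition block (n N i : nat) : {set 'I_n} :=
  [set j : 'I_n | (i * N <= j) && (j < i.+1 * N)].

From mathcomp Require Import all_boot.
From mathcomp Require Import zify.

Set Implicit Arguments. Unset Strict Implicit. Unset Printing Implicit Defensive.

(* A Singleton-type argument applied twice.  If two codewords agree on K, their
   projections onto S differ at most on S \ K; so when |S \ K| is below the
   minimum distance of C|_S, the projection onto K is injective on C|_S.
   With S the whole index set and K the first n - d + 1 coordinates this gives
   |C| <= |C|_K|, and K consists of s - t - 1 full blocks followed by the first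
   N - del + 1 coordinates of the next block.  Inside each block R_i, the same
   argument with K the first r coordinates of R_i shows |C|_{R_i}| <= q^r; the
   partial block has at most q^(N - del + 1) and at most q^r projections. *)

Section Projection.

Variables (Q : finType) (n : nat).
Implicit Types (S K A B : {set 'I_n}) (x y : {ffun 'I_n -> Q}) (C : {set {ffun 'I_n -> Q}}).

Definition proj S (x : {ffun 'I_n -> Q}) : {ffun 'I_n -> option Q} :=
  [ffun j => if j \in S then Some (x j) else None].

Definition restr S (z : {ffun 'I_n -> option Q}) : {ffun 'I_n -> option Q} :=
  [ffun j => if j \in S then z j else None].

Lemma restr_proj S K x : K \subset S -> restr K (proj S x) = proj K x.
Proof.
move=> KS; apply/ffunP => j; rewrite !ffunE.
by case: ifP => // jK; rewrite (subsetP KS j jK).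
Qed.

Lemma proj_eqP S x y : reflect {in S, x =1 y} (proj S x == proj S y).
Proof.
apply: (iffP eqP) => [eSxy j jS | eSxy].
  by have := congr1 (fun f : {ffun 'I_n -> option Q} => f j) eSxy;
    rewrite !ffunE jS => -[].
by apply/ffunP => j; rewrite !ffunE; case: ifP => // /eSxy ->.
Qed.

Lemma hdist_on_eq0 S x y : (hdist_on S x y == 0) = (proj S x == proj S y).
Proof.
rewrite cards_eq0; apply/eqP/proj_eqP => [S0 j jS | eSxy].
  by have := in_set0 j; rewrite -S0 inE jS /= => /negbFE/eqP.
by apply/setP => j; rewrite !inE; case: (boolP (j \in S)) => //= /eSxy ->; rewrite eqxx.
Qed.

Lemma hdist_on_proj_eq S K x y :
  proj K x = proj K y -> hdist_on S x y <= #|S :\: K|.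
Proof.
move/eqP/proj_eqP => eKxy; apply: subset_leq_card; apply/subsetP => j.
rewrite !inE => /andP[jS nxy]; rewrite jS andbT.
by apply: contraNN nxy => jK; apply/eqP/eKxy.
Qed.

Lemma imset_proj_restr C S K :
  K \subset S -> proj K @: C = restr K @: (proj S @: C).
Proof.
by move=> KS; rewrite -imset_comp; apply: eq_imset => x /=; rewrite restr_proj.
Qed.

Lemma card_proj_subset C S K :
  K \subset S -> #|proj K @: C| <= #|proj S @: C|.
Proof. by move=> KS; rewrite (imset_proj_restr C KS) leq_imset_card. Qed.

Lemma card_projU C A B :
  #|proj (A :|: B) @: C| <= #|proj A @: C| * #|proj B @: C|.
Proof.
rewrite -cardsX -(@card_in_imset _ _ (fun z => (restr A z, restr B z))).
  apply: subset_leq_card; apply/subsetP => _ /imsetP[_ /imsetP[x xC ->] ->].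
  by rewrite in_setX !restr_proj ?subsetUl ?subsetUr // !imset_f.
move=> _ _ /imsetP[x _ ->] /imsetP[y _ ->] [].
rewrite !restr_proj ?subsetUl ?subsetUr // => /eqP/proj_eqP eA /eqP/proj_eqP eB.
by apply/eqP/proj_eqP => j; rewrite in_setU => /orP[/eA | /eB].
Qed.

Lemma card_proj_le C S : #|proj S @: C| <= #|Q| ^ #|S|.
Proof.
have -> : #|Q| = #|Some @: [set: Q]| by rewrite card_imset ?cardsT //; apply: Some_inj.
rewrite -(card_pffun_on None).
apply: subset_leq_card; apply/subsetP => _ /imsetP[x _ ->].
apply/pffun_onP; split.
  by apply/subsetP => j; rewrite inE ffunE; case: ifP.
by move=> _ /imageP[j jS ->]; rewrite ffunE jS imset_f.
Qed.

Lemma card_projT C : #|proj [set: 'I_n] @: C| = #|C|.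
Proof.
by apply: card_in_imset => x y _ _ /eqP/proj_eqP exy; apply/ffunP => j; apply: exy.
Qed.

Lemma min_dist_le C d : min_dist C d -> d <= n.
Proof.
by move=> [[x [y [_ _ _ <-]]] _]; apply: leq_trans (max_card _) _; rewrite card_ord.
Qed.

Lemma proj_min_distT C d : min_dist C d -> proj_min_dist_ge C [set: 'I_n] d.
Proof.
move=> [_ md] x y xC yC; rewrite lt0n hdist_on_eq0 => nxy.
apply: leq_trans (md x y xC yC _) _.
  by apply: contraNneq nxy => ->.
by apply: subset_leq_card; apply/subsetP => j; rewrite !inE.
Qed.

Lemma card_proj_le_puncture C S K rho :
  K \subset S -> #|S :\: K| < rho -> proj_min_dist_ge C S rho ->
  #|proj S @: C| <= #|proj K @: C|.
Proof.
move=> KS SK_rho md; rewrite (imset_proj_restr C KS) card_in_imset // => _ _ /imsetP[x xC ->] /imsetP[y yC ->].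
rewrite !restr_proj // => eK; apply/eqP; rewrite -hdist_on_eq0 -leqn0 leqNgt.
apply/negP => dxy; have := leq_trans (md x y xC yC dxy) (hdist_on_proj_eq S eK).
by rewrite leqNgt SK_rho.
Qed.

Definition segment (a b : nat) : {set 'I_n} := [set j : 'I_n | a <= j < b].

Lemma card_segment a b : #|segment a b| <= b - a.
Proof.
rewrite cardE -(size_map val) -(size_iota a (b - a)).
apply: uniq_leq_size; first by rewrite map_inj_uniq ?enum_uniq //; apply: val_inj.
by move=> i /mapP[j]; rewrite mem_enum inE => /andP[aj jb] ->; rewrite mem_iota /=; lia.
Qed.

Lemma segment_sub a b a' b' :
  a <= a' -> b' <= b -> segment a' b' \subset segment a b.
Proof. by move=> aa' b'b; apply/subsetP => j; rewrite !inE; lia. Qed.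

Lemma segment_cat a b c :
  a <= b <= c -> segment a c = segment a b :|: segment b c.
Proof. by move=> abc; apply/setP => j; rewrite !inE; lia. Qed.

Lemma segmentC b : [set: 'I_n] :\: segment 0 b = segment b n.
Proof. by apply/setP => j; rewrite !inE ltn_ord; lia. Qed.

Lemma card_proj_segment_le C a b m :
  0 < #|Q| -> b - a <= m -> #|proj (segment a b) @: C| <= #|Q| ^ m.
Proof.
move=> Q_gt0 abm; apply: leq_trans (card_proj_le _ _) _.
by rewrite leq_pexp2l // (leq_trans (card_segment _ _)).
Qed.

Lemma card_proj_block_le C N rho r i :
  0 < #|Q| -> N = r + rho - 1 -> 0 < rho -> proj_min_dist_ge C (block n N i) rho ->
  #|proj (block n N i) @: C| <= #|Q| ^ r.
Proof.
move=> Q_gt0 eN rho_gt0 md.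
have KS : segment (i * N) (i * N + r) \subset block n N i.
  by apply: segment_sub; lia.
apply: leq_trans (card_proj_le_puncture KS _ md) _.
  apply: (@leq_ltn_trans #|segment (i * N + r) (i.+1 * N)|).
    by apply: subset_leq_card; apply/subsetP => j; rewrite !inE; lia.
  by apply: leq_ltn_trans (card_segment _ _) _; rewrite mulSn; lia.
by apply: card_proj_segment_le => //; lia.
Qed.

Lemma card_proj_blocks_le C N k b :
  (forall i, i < k -> #|proj (block n N i) @: C| <= b) ->
  #|proj (segment 0 (k * N)) @: C| <= b ^ k.
Proof.
elim: k => [|k IHk] blk_b.
  apply: leq_trans (card_proj_le _ _) _.
  have /eqP -> : #|segment 0 (0 * N)| == 0.
    by rewrite -leqn0 (leq_trans (card_segment _ _)) ?mul0n.
  by rewrite expn0.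
rewrite (@segment_cat 0 (k * N)) ?leq_mul ?andTb //.
apply: leq_trans (card_projU _ _ _) _; rewrite expnSr leq_mul //.
  by apply: IHk => i ik; apply: blk_b; apply: ltnW.
exact: blk_b.
Qed.

End Projection.

Theorem mainTheorem7 (q r rho s : nat) (Q : finType)
    (C : {set {ffun 'I_(s * (r + rho - 1)) -> Q}}) (d t del : nat) :
  2 <= q -> 1 <= r -> 2 <= rho -> 1 <= s ->
  #|Q| = q ->
  min_dist C d ->
  (forall i, i < s -> proj_min_dist_ge C (block (s * (r + rho - 1)) (r + rho - 1) i) rho) ->
  d = t * (r + rho - 1) + del -> 1 <= del -> del <= r + rho - 1 ->
  #|C| <= q ^ (if rho <= del then r * (s - t) + rho - del else r * (s - t)).
Proof.
move=> q2 _ rho2 _ cQ md blocks_md ed del1 delN.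
set N := r + rho - 1 in blocks_md ed delN *; set n := s * N.
have Q_gt0 : 0 < #|Q| by rewrite cQ; lia.
have [m s_eq] : exists m, s = t + m.+1.
  by exists (s - t - 1); move: (min_dist_le md); rewrite /n ed; nia.
have blk : forall i, i < s -> #|proj (block n N i) @: C| <= q ^ r.
  by move=> i /blocks_md; rewrite -cQ; apply: card_proj_block_le => //; lia.
set b := m * N + (N - del + 1).
have C_le : #|C| <= #|proj (segment n 0 b) @: C|.
  rewrite -card_projT; apply: card_proj_le_puncture (proj_min_distT md) => //.
  by rewrite segmentC (leq_ltn_trans (card_segment _ _ _)) // /n ed s_eq; nia.
rewrite (@segment_cat _ 0 (m * N)) in C_le; last lia.
apply: leq_trans (leq_trans C_le (card_projU _ _ _)) _.
have m_lt_s : m < s by lia.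
have head := card_proj_blocks_le (k := m) (fun i im => blk i (ltn_trans im m_lt_s)).
rewrite -expnM in head.
case: ifP => [rho_le_del | _].
  have tail : #|proj (segment n (m * N) b) @: C| <= q ^ (r + rho - del).
    by rewrite -cQ card_proj_segment_le //; lia.
  by apply: leq_trans (leq_mul head tail) _; rewrite -expnD leq_exp2l; lia.
have tail : #|proj (segment n (m * N) b) @: C| <= q ^ r.
  apply: leq_trans (blk m m_lt_s); apply: card_proj_subset.
  by apply: segment_sub; lia.
by apply: leq_trans (leq_mul head tail) _; rewrite -expnD leq_exp2l; lia.
Qed.
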